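(* Every $d$-degenerate graph $G$ satisfies $\operatorname{tww}(G)\leq\sqrt{2d|V(G)|}+2d$.
   Context: All graphs are finite and simple. A graph $G$ is $d$-degenerate if there is a linear order $v_1,\dots,v_n$ of $V(G)$ such that each $v_i$ has at most $d$ neighbors among $v_1,\dots,v_{i-1}$. A trigraph is a graph whose edges are each colored red or black; a graph is viewed as a trigraph with all edges black. The red degree of a vertex is the number of red edges incident to it. For a partition $\mathcal{P}$ of $V(G)$, the quotient trigraph $G/\mathcal{P}$ has vertex set $\mathcal{P}$; two distinct parts $U,W$ are joined by a black edge if every pair $\{u,w\}$ with $u\in U,w\in W$ is a black edge of $G$, are non-adjacent if no such pair is an edge of $G$, and are joined by a red edge otherwise. A contraction sequence of an $n$-vertex trigraph $G$ is a sequence $\mathcal{P}_n,\dots,\mathcal{P}_1$ of partitions of $V(G)$ where $\mathcal{P}_n$ is the partition into singletons and each $\mathcal{P}_i$ arises from $\mathcal{P}_{i+1}$ by merging two parts. Its width is the maximum red degree over all $G/\mathcal{P}_i$. The twin-width $\operatorname{tww}(G)$ is the minimum width of a contraction sequence of $G$. *)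

From Stdlib Require Import Reals.
From mathcomp Require Import all_boot.

Set Implicit Arguments.
Unset Strict Implicit.
Unset Printing Implicit Defensive.

Section TwinWidth.
Variables (T : finType) (e : rel T).

(* A simple graph on vertex set T: e symmetric and irreflexive (hypotheses
   of the theorem). *)

Definition degenerate (d : nat) : Prop :=
  exists ord : seq T,
    perm_eq ord (enum T) /\
    forall (p q : seq T) (v : T), ord = p ++ v :: q -> count (e v) p <= d.

Definition singletons : {set {set T}} := [set [set x] | x : T].

Definition merge_step (P Q : {set {set T}}) : bool :=
  [exists U in P, exists W in P,
     (U != W) && (Q == (P :\ U :\ W) :|: [set U :|: W])].

(* Red edge between two parts of the quotient trigraph G/P (G is a graph,
   so all its edges are black): some pair is an edge and not every pair is. *)
Definition red_edge (U W : {set T}) : bool :=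
  [exists u in U, exists w in W, e u w] &&
  ~~ [forall u in U, forall w in W, e u w].

Definition red_degree (P : {set {set T}}) (U : {set T}) : nat :=
  #|[set W in P | (W != U) && red_edge U W]|.

Definition quotient_width (P : {set {set T}}) : nat :=
  \max_(U in P) red_degree P U.

(* A contraction sequence P_n, ..., P_1 is represented by the list
   s = [P_(n-1); ...; P_1] following P_n = singletons: each partition arises
   from the previous one by merging two parts, and the last has (at most,
   i.e. exactly when n >= 1) one part. *)
Definition contraction_seq (s : seq {set {set T}}) : bool :=
  path merge_step singletons s && (#|last singletons s| <= 1).

Definition seq_width (s : seq {set {set T}}) : nat :=
  \max_(P <- singletons :: s) quotient_width P.

Definition tww_le (b : R) : Prop :=
  exists s, contraction_seq s /\ Rle (INR (seq_width s)) b.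

End TwinWidth.

From Stdlib Require Import Reals.
From mathcomp Require Import all_boot.
From mathcomp Require Import zify.

Set Implicit Arguments.
Unset Strict Implicit.
Unset Printing Implicit Defensive.

(* Order the vertices so that each has at most [d] neighbours after it, and
   only ever merge parts that are intervals of this order.  A red edge from an
   interval [X] to a later interval ends at a forward neighbour of [X], so [X]
   has at most [l + d |X|] red neighbours when [l] intervals lie before it.
   Cut the order into consecutive blocks, [d] of each size [m, m-1, ..., 1],
   with [m] least such that [d m (m+1) / 2 >= n]; the [l]-th block has size
   [m - l / d], so [l + d (m - l / d) <= d m + d - 1].  First merge every
   vertex, from left to right, into the block containing it (the vertices not
   yet merged are singletons, and two singletons are never joined by a red
   edge), then merge the at most [d m] blocks in any order.  Minimality of [m]
   gives [d (m - 1) <= sqrt (2 d n)].  For [d = 0] the graph has no edges, so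
   no red edge ever appears. *)

Lemma last_iota m n : last m (iota m.+1 n) = m + n.
Proof. by elim: n m => [|n IH] m /=; rewrite ?addn0 // IH addSnnS. Qed.

Lemma take_filter (A : Type) (p : pred A) (s : seq A) k :
  exists j, take k (filter p s) = filter p (take j s).
Proof.
elim: s k => [|x s IH] [|k]; try by exists 0; rewrite take0.
have [j sj] := IH k; have [j' sj'] := IH k.+1.
case px: (p x).
  by exists j.+1; rewrite /= px /= sj.
by exists j'.+1; rewrite /= px sj'.
Qed.

Lemma card_le_size (T : finType) (A : {pred T}) (g : T -> nat) (s : seq nat) :
  {in A &, injective g} -> {in A, forall x, g x \in s} -> #|A| <= size s.
Proof.
move=> g_inj gA; rewrite cardE -(size_map g); apply: uniq_leq_size.
  by rewrite map_inj_in_uniq ?enum_uniq // => x y; rewrite !mem_enum; exact: g_inj.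
by move=> _ /mapP[x xA ->]; apply: gA; rewrite -mem_enum.
Qed.

Lemma red_edge_singletons (T : finType) (e : rel T) x y : red_edge e [set x] [set y] = false.
Proof.
apply/negP => /andP[/existsP[a /andP[/set1P-> /existsP[b /andP[/set1P-> xy]]]] /negP]; apply.
by apply/forallP => a'; apply/implyP => /set1P->; apply/forallP => b'; apply/implyP => /set1P->.
Qed.

Lemma red_degree_edgeless (T : finType) (e : rel T) P U :
  (forall x y, e x y = false) -> red_degree e P U = 0.
Proof.
move=> no_edge; apply/eqP; rewrite cards_eq0; apply/eqP/setP => W.
rewrite !inE; apply/negbTE/and3P => -[_ _ /andP[/existsP[x /andP[_ /existsP[y /andP[_ exy]]]] _]].
by rewrite no_edge in exy.
Qed.

Lemma seq_width_le (T : finType) (e : rel T) (s : seq {set {set T}}) w :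
  (forall P, P \in singletons T :: s -> forall U, U \in P -> red_degree e P U <= w) ->
  seq_width e s <= w.
Proof.
move=> le_w; apply/bigmax_leqP_seq => P sP _.
by apply/bigmax_leqP => U PU; exact: le_w.
Qed.

(* A set [C] of cut positions splits [0, n) into intervals, each starting at
   [0] or at a cut; [last_cut C i] is the start of the interval containing [i]. *)
Fixpoint last_cut (C : pred nat) (i : nat) : nat :=
  if i is i'.+1 then (if C i'.+1 then i'.+1 else last_cut C i') else 0.

Section LastCut.
Variable C : pred nat.

Lemma last_cut_le i : last_cut C i <= i.
Proof. by elim: i => //= i IH; case: (C i.+1) => //; exact: leqW. Qed.

Lemma last_cut_is_cut i : (last_cut C i == 0) || C (last_cut C i).
Proof. by elim: i => //= i IH; case: ifP => // ->; rewrite orbT. Qed.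

Lemma not_cut_gt_last_cut i j : last_cut C i < j <= i -> ~~ C j.
Proof.
elim: i => [|i IH] /=; first by lia.
case: ifP => Ci; first by lia.
case/andP=> h1; rewrite leq_eqVlt => /orP[/eqP->|h2]; first by rewrite Ci.
by apply: IH; rewrite h1.
Qed.

Lemma last_cut_eq i k : k <= i -> (k == 0) || C k ->
  (forall j, k < j <= i -> ~~ C j) -> last_cut C i = k.
Proof.
elim: i => [|i IH] /=; first by rewrite leqn0 => /eqP.
rewrite leq_eqVlt => /orP[/eqP->|ki] hk hfree.
  by case: ifP => // Ci; case/orP: hk => [//|]; rewrite Ci.
case: ifP => Ci; first by move: (hfree i.+1); rewrite ki leqnn Ci => /(_ isT).
by apply: IH => // j /andP[h1 h2]; apply: hfree; rewrite h1 leqW.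
Qed.

Lemma last_cut_id i : C i -> last_cut C i = i.
Proof. by move=> Ci; apply: last_cut_eq => //; [rewrite Ci orbT | lia]. Qed.

Lemma last_cut_mono : {homo last_cut C : i j / i <= j}.
Proof.
move=> i j ij; rewrite leqNgt; apply/negP => lt.
case/orP: (last_cut_is_cut i) => [/eqP h|h]; first by rewrite h in lt.
have := @not_cut_gt_last_cut j (last_cut C i).
by rewrite lt (leq_trans (last_cut_le i) ij) h => /(_ isT).
Qed.

End LastCut.

Lemma last_cut_rem (C : pred nat) j i : C j -> 0 < j ->
  last_cut (fun k => C k && (k != j)) i =
  if last_cut C i == j then last_cut C j.-1 else last_cut C i.
Proof.
move=> Cj j0; case: ifP => /eqP h.
- have lej := last_cut_le C j.-1.
  apply: last_cut_eq; first by have := last_cut_le C i; lia.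
  + case/orP: (last_cut_is_cut C j.-1) => [->//|->]; apply/orP; right; lia.
  + move=> k /andP[h1 h2] /=; case: (ltnP j.-1 k) => [h3|h3].
      case: (k =P j) => [->|/eqP kj]; first by rewrite andbF.
      by rewrite andbT; apply: (@not_cut_gt_last_cut C i); rewrite h2 h andbT; lia.
    by rewrite (negbTE (@not_cut_gt_last_cut C j.-1 k _)) // h1 h3.
- apply: last_cut_eq; first exact: last_cut_le.
  + by case/orP: (last_cut_is_cut C i) => [->//|->]; rewrite /=; apply/orP; right; exact/eqP.
  + by move=> k /not_cut_gt_last_cut /negbTE->.
Qed.

Lemma eq_last_cut (C C' : pred nat) : C =1 C' -> last_cut C =1 last_cut C'.
Proof. by move=> h; elim=> //= i ->; rewrite h. Qed.

Section Blocks.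
Variables d m : nat.
Hypothesis d_gt0 : 0 < d.

Definition block_size l := m - l %/ d.
Definition block_start l := \sum_(j < l) block_size j.
Definition block_starts := map block_start (iota 0 (d * m)).

Lemma block_startS l : block_start l.+1 = block_start l + block_size l.
Proof. by rewrite /block_start big_ord_recr. Qed.

Lemma leq_block_start : {homo block_start : k l / k <= l}.
Proof.
move=> k; elim=> [|l IH]; first by rewrite leqn0 => /eqP->.
rewrite leq_eqVlt => /orP[/eqP->//|]; rewrite ltnS => /IH h.
by rewrite block_startS (leq_trans h) ?leq_addr.
Qed.

Lemma block_start_ltS l : l < d * m -> block_start l < block_start l.+1.
Proof.
move=> hl; rewrite block_startS -[X in X < _]addn0 ltn_add2l /block_size subn_gt0.
by rewrite ltn_divLR // mulnC.
Qed.

Lemma double_block_start k : k <= m -> 2 * block_start (d * k) = d * k * (2 * m + 1 - k).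
Proof.
elim: k => [|k IH] hk; first by rewrite muln0 /block_start big_ord0.
rewrite mulnS addnC /block_start -(big_mkord xpredT block_size).
rewrite (big_cat_nat _ (n := d * k)) ?leq_addr //= big_mkord -/(block_start (d * k)).
have -> : \sum_(d * k <= i < d * k + d) block_size i = \sum_(d * k <= i < d * k + d) (m - k).
  apply: eq_big_nat => i /andP[h1 h2]; rewrite /block_size.
  have -> : i = k * d + (i - d * k) by lia.
  rewrite divnMDl // divn_small //; lia.
rewrite sum_nat_const_nat mulnDr IH; last by lia.
have -> : d * k + d - d * k = d by lia.
have -> : m = k.+1 + (m - k.+1) by lia.
set a := m - k.+1; nia.
Qed.

Lemma block_starts_cover n : 2 * n <= d * m * m.+1 -> n <= block_start (d * m).
Proof.
have := double_block_start (leqnn m).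
have -> : 2 * m + 1 - m = m.+1 by lia.
lia.
Qed.

Lemma block_budget l : l < d * m -> l + d * block_size l <= d * m + d - 1.
Proof.
move=> hl; rewrite /block_size.
have hq : l %/ d < m by rewrite ltn_divLR // mulnC.
have hr : l %% d < d by rewrite ltn_pmod.
have he := divn_eq l d.
set q := l %/ d in hq he *; set r := l %% d in hr he *.
rewrite {1}he; nia.
Qed.

Lemma zero_in_block_starts : 0 < m -> 0 \in block_starts.
Proof.
move=> m_gt0; apply/mapP; exists 0; last by rewrite /block_start big_ord0.
by rewrite mem_iota add0n muln_gt0 d_gt0 m_gt0.
Qed.

End Blocks.

Section Intervals.
Variables (T : finType) (u : seq T).
Hypotheses (u_uniq : uniq u) (u_all : forall x, x \in u).

Lemma size_u : size u = #|T|.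
Proof.
by rewrite cardT; apply/perm_size/uniq_perm; rewrite ?enum_uniq // => x; rewrite mem_enum u_all.
Qed.

Definition pos x := index x u.

Lemma pos_lt x : pos x < #|T|.
Proof. by rewrite -size_u index_mem. Qed.

Lemma pos_inj : injective pos.
Proof. by move=> x y h; rewrite -(nth_index x (u_all x)) -/(pos x) h /pos nth_index. Qed.

Lemma pos_surj i : i < #|T| -> exists y, pos y = i.
Proof.
rewrite -size_u; case Hu: u => [|x0 s] // hi.
by exists (nth x0 u i); rewrite /pos index_uniq // Hu.
Qed.

Definition cut_class (C : pred nat) x := [set y | last_cut C (pos y) == last_cut C (pos x)].
Definition cut_partition (C : pred nat) := [set cut_class C x | x : T].

Lemma cut_class_eq (C : pred nat) x y :
  (cut_class C x == cut_class C y) = (last_cut C (pos x) == last_cut C (pos y)).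
Proof.
apply/eqP/eqP => [h|h]; last by apply/setP => z; rewrite !inE h.
have : x \in cut_class C y by rewrite -h inE.
by rewrite inE => /eqP.
Qed.

Lemma eq_cut_partition (C C' : pred nat) : C =1 C' -> cut_partition C = cut_partition C'.
Proof.
by move=> h; apply: eq_imset => x; apply/setP => y; rewrite !inE !(eq_last_cut h).
Qed.

Lemma cut_partition_singletons (C : pred nat) :
  (forall i, 0 < i < #|T| -> C i) -> cut_partition C = singletons T.
Proof.
move=> hC; have hl z : last_cut C (pos z) = pos z.
  by case h0: (pos z) => [//|k]; apply/last_cut_id/hC; rewrite -h0 pos_lt h0.
apply: eq_imset => x; apply/setP => y; rewrite !inE !hl.
by apply/eqP/eqP => [/pos_inj|->].
Qed.

Lemma cut_partition_trivial (C : pred nat) :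
  (forall i, 0 < i < #|T| -> ~~ C i) -> #|cut_partition C| <= 1.
Proof.
move=> hC; have hl z : last_cut C (pos z) = 0.
  apply: last_cut_eq => // j /andP[j_gt0 j_le]; apply: hC.
  by rewrite j_gt0 (leq_ltn_trans j_le (pos_lt z)).
apply/card_le1_eqP => _ _ /imsetP[x _ ->] /imsetP[y _ ->].
by apply/eqP; rewrite cut_class_eq !hl.
Qed.

Lemma cut_class_rem (C : pred nat) j x : C j -> 0 < j ->
  let merged := [:: j; last_cut C j.-1] in
  cut_class (fun i => C i && (i != j)) x =
  if last_cut C (pos x) \in merged then [set y | last_cut C (pos y) \in merged]
  else cut_class C x.
Proof.
move=> Cj j_gt0 merged; apply/setP => w.
case: ifP => hx; rewrite !inE !last_cut_rem //; move: hx; rewrite !inE.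
  by case/orP => /eqP->; rewrite ?eqxx ?if_same; case: (_ =P j) => [->|_]; rewrite ?eqxx.
case/norP => /negbTE aj ab; rewrite aj.
by case: (_ =P j) => [->|//]; rewrite eq_sym (negbTE ab) eq_sym aj.
Qed.

Lemma merge_cut_partition (C : pred nat) j : C j -> 0 < j < #|T| ->
  merge_step (cut_partition C) (cut_partition (fun i => C i && (i != j))).
Proof.
move=> Cj /andP[j_gt0 j_lt].
have [y ly] : exists y, last_cut C (pos y) = j.
  by have [y hy] := pos_surj j_lt; exists y; rewrite hy last_cut_id.
have [z lz] : exists z, last_cut C (pos z) = last_cut C j.-1.
  by have [z hz] := pos_surj (leq_ltn_trans (leq_pred j) j_lt); exists z; rewrite hz.
have bj : last_cut C j.-1 < j by have := last_cut_le C j.-1; lia.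
have merged : [set w | last_cut C (pos w) \in [:: j; last_cut C j.-1]] =
              cut_class C y :|: cut_class C z.
  by apply/setP => w; rewrite !inE ly lz.
apply/existsP; exists (cut_class C y); rewrite imset_f //=.
apply/existsP; exists (cut_class C z); rewrite imset_f //=.
rewrite cut_class_eq ly lz neq_ltn bj orbT /=; apply/eqP/setP => W.
rewrite !inE; apply/imsetP/idP => [[x _ ->]|].
  rewrite cut_class_rem //; case: ifP => [_|]; first by rewrite merged eqxx orbT.
  by rewrite !inE !cut_class_eq ly lz imset_f // => /norP[/negbTE-> /negbTE->].
case/orP => [/and3P[Wy Wz /imsetP[x _ Wx]]|/eqP->].
  exists x => //; rewrite cut_class_rem // ifF // !inE.
  by move: Wy Wz; rewrite Wx !cut_class_eq ly lz => /negbTE-> /negbTE->.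
by exists y => //; rewrite cut_class_rem // ly mem_head merged.
Qed.

Definition remaining_cuts (r : seq nat) k i := (0 < i < #|T|) && (i \notin take k r).

Lemma path_remaining_cuts (r : seq nat) :
  uniq r -> all (fun i => 0 < i < #|T|) r -> forall l k, k + l = size r ->
  path (@merge_step T) (cut_partition (remaining_cuts r k))
       [seq cut_partition (remaining_cuts r k') | k' <- iota k.+1 l].
Proof.
move=> r_uniq r_cuts; elim=> [|l IH] k kl //=.
have kr : k < size r by lia.
have r_k := allP r_cuts _ (mem_nth 0 kr).
rewrite IH ?addSnnS // andbT.
have -> : cut_partition (remaining_cuts r k.+1) =
          cut_partition (fun i => remaining_cuts r k i && (i != nth 0 r k)).
  apply: eq_cut_partition => i; rewrite /remaining_cuts (take_nth 0 kr) mem_rcons inE.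
  by rewrite negb_or -!andbA [(i \notin _) && _]andbC.
have cut_k : remaining_cuts r k (nth 0 r k).
  by rewrite /remaining_cuts r_k in_take ?mem_nth // index_uniq // ltnn.
exact: merge_cut_partition cut_k r_k.
Qed.

Lemma singletons_remaining_cuts r : singletons T = cut_partition (remaining_cuts r 0).
Proof. by symmetry; apply: cut_partition_singletons => i; rewrite /remaining_cuts take0 => ->. Qed.

Lemma contraction_seq_remaining_cuts (r : seq nat) :
  uniq r -> all (fun i => 0 < i < #|T|) r -> (forall i, 0 < i < #|T| -> i \in r) ->
  contraction_seq [seq cut_partition (remaining_cuts r k) | k <- iota 1 (size r)].
Proof.
move=> r_uniq r_cuts r_all; rewrite /contraction_seq (singletons_remaining_cuts r).
rewrite path_remaining_cuts //= (last_map (fun k => cut_partition (remaining_cuts r k))).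
rewrite last_iota add0n; apply: cut_partition_trivial => i i_cut.
by rewrite /remaining_cuts take_size r_all // i_cut.
Qed.

Lemma exists_contraction_seq : exists s : seq {set {set T}}, contraction_seq s.
Proof.
exists [seq cut_partition (remaining_cuts (iota 1 #|T|.-1) k) | k <- iota 1 (size (iota 1 #|T|.-1))].
apply: contraction_seq_remaining_cuts; rewrite ?iota_uniq //.
  by apply/allP => i; rewrite mem_iota; lia.
by move=> i; rewrite mem_iota; lia.
Qed.

Definition last_cut_ord (C : pred nat) x : 'I_#|T| :=
  Ordinal (leq_ltn_trans (last_cut_le C (pos x)) (pos_lt x)).

Lemma card_cut_classes_le (C : pred nat) (Y : {pred T}) (s : seq nat) :
  {in Y, forall y, last_cut C (pos y) \in s} -> #|[set cut_class C y | y in Y]| <= size s.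
Proof.
move=> Ys; pose part (k : 'I_#|T|) := [set z | last_cut C (pos z) == k].
have -> : [set cut_class C y | y in Y] = part @: (last_cut_ord C @: Y).
  by rewrite -imset_comp; apply: eq_imset => y; apply/setP => z; rewrite !inE.
apply: leq_trans (leq_imset_card _ _) _.
apply: (@card_le_size _ _ val); first by move=> k k' _ _; exact: val_inj.
by move=> _ /imsetP[y yY ->]; exact: Ys.
Qed.

Variables (e : rel T) (d : nat).
Hypothesis forward_degree : forall v, #|[set w | e v w && (pos v < pos w)]| <= d.

Lemma forward_degree0_no_edge : symmetric e -> irreflexive e -> d = 0 ->
  forall x y, e x y = false.
Proof.
move=> e_sym e_irr d0 x y; apply/negP => exy.
have no_forward v w : e v w -> pos v < pos w -> False.
  move=> evw lt_vw; have := forward_degree v; rewrite d0 leqn0 cards_eq0.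
  by move/eqP/setP/(_ w); rewrite !inE evw lt_vw.
case: (ltngtP (pos x) (pos y)) => [lt|gt|/pos_inj eq]; first exact: no_forward exy lt.
  by apply: no_forward gt; rewrite e_sym.
by rewrite eq e_irr in exy.
Qed.

Definition forward_nbhd (U : {set T}) := \bigcup_(v in U) [set w | e v w && (pos v < pos w)].

Lemma card_forward_nbhd U : #|forward_nbhd U| <= #|U| * d.
Proof.
rewrite -sum_nat_const; apply: (big_rec2 (fun (A : {set T}) n => #|A| <= n)).
  by rewrite cards0.
by move=> v A n _ hA; rewrite cardsU (leq_trans (leq_subr _ _)) // leq_add.
Qed.

(* A red edge to a later interval ends at a forward neighbour of [cut_class C x]. *)
Lemma red_degree_cut_class (C : pred nat) x :
  red_degree e (cut_partition C) (cut_class C x) <=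
  #|[set cut_class C y | y in [set y | last_cut C (pos y) < last_cut C (pos x)]]| +
  #|cut_class C x| * d.
Proof.
set X := cut_class C x; set Left := [set cut_class C y | y in _].
apply: leq_trans (_ : #|Left :|: [set cut_class C w | w in forward_nbhd X]| <= _).
  apply: subset_leq_card; apply/subsetP => W; rewrite inE => /andP[/imsetP[y _ ->]].
  rewrite cut_class_eq => /andP[hne /andP[/existsP[v /andP[vX /existsP[w /andP[wy evw]]]] _]].
  move: vX wy; rewrite !inE => /eqP vx /eqP wy.
  case: (ltngtP (last_cut C (pos y)) (last_cut C (pos x))) => [lt|gt|eq].
  - by apply/orP; left; apply/imsetP; exists y; rewrite ?inE.
  - apply/orP; right; apply/imsetP; exists w; last first.
      by apply/eqP; rewrite cut_class_eq wy.
    apply/bigcupP; exists v; rewrite !inE ?vx ?evw //=.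
    by rewrite ltnNge; apply/negP => /(last_cut_mono C); rewrite vx wy; lia.
  - by rewrite eq eqxx in hne.
rewrite cardsU (leq_trans (leq_subr _ _)) // leq_add2l.
exact: leq_trans (leq_imset_card _ _) (card_forward_nbhd X).
Qed.

Variable m : nat.
Hypotheses (d_gt0 : 0 < d) (m_gt0 : 0 < m) (blocks_cover : 2 * #|T| <= d * m * m.+1).

Lemma red_degree_block_cuts (C : pred nat) :
  (forall i, C i -> i \in block_starts d m) ->
  forall U, U \in cut_partition C -> red_degree e (cut_partition C) U <= d * m + d - 1.
Proof.
move=> C_starts U PU; rewrite /red_degree.
apply: leq_trans (_ : #|cut_partition C :\ U| <= _).
  by apply: subset_leq_card; apply/subsetP => W; rewrite !inE => /andP[-> /andP[-> _]].
have : #|cut_partition C| <= d * m.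
  rewrite -[d * m](size_iota 0) -(size_map (block_start d m)).
  apply: card_cut_classes_le => y _.
  by case/orP: (last_cut_is_cut C (pos y)) => [/eqP->|/C_starts//]; exact: zero_in_block_starts.
by rewrite (cardsD1 U) PU; lia.
Qed.

(* During the first phase every vertex up to [t] has been merged into its block. *)
Section FirstPhase.
Variables (C : pred nat) (t : nat).
Hypothesis C_def : forall i, 0 < i < #|T| -> C i = (i \in block_starts d m) || (t < i).

Lemma first_phase_last_cut_start y :
  last_cut C (pos y) <= t -> last_cut C (pos y) \in block_starts d m.
Proof.
move=> le_t; have [->|lab_gt0] := posnP (last_cut C (pos y)); first exact: zero_in_block_starts.
have lab_lt : last_cut C (pos y) < #|T| := leq_ltn_trans (last_cut_le C (pos y)) (pos_lt y).
have := last_cut_is_cut C (pos y); rewrite gtn_eqF //= C_def ?lab_gt0 //=.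
by case/orP => //; lia.
Qed.

Lemma first_phase_singleton y : t < last_cut C (pos y) -> cut_class C y = [set y].
Proof.
have lab_pos w : t < last_cut C (pos w) -> last_cut C (pos w) = pos w.
  move=> lt_lab; have le_pos := last_cut_le C (pos w).
  apply: last_cut_id; rewrite C_def; first by apply/orP; right; lia.
  by rewrite pos_lt andbT; lia.
move=> lt_y; apply/setP => z; rewrite !inE; apply/eqP/eqP => [lab_zy|->//].
have lt_z : t < last_cut C (pos z) by rewrite lab_zy.
by apply: pos_inj; rewrite -(lab_pos z lt_z) -(lab_pos y lt_y) lab_zy.
Qed.

Lemma first_phase_block_card l x : l < d * m ->
  last_cut C (pos x) = block_start d m l -> #|cut_class C x| <= block_size d m l.
Proof.
move=> l_lt lab_x; rewrite -[block_size d m l](size_iota (block_start d m l)).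
apply: (@card_le_size _ _ pos); first by move=> y z _ _; exact: pos_inj.
move=> y; rewrite inE lab_x => /eqP lab_y; rewrite mem_iota -block_startS.
rewrite -lab_y last_cut_le /= ltnNge; apply/negP => next_le.
have [l1_lt|l1_ge] := ltnP l.+1 (d * m).
  have cut_next : C (block_start d m l.+1).
    rewrite C_def ?map_f ?mem_iota //; have := block_start_ltS d_gt0 l_lt; have := pos_lt y; lia.
  have := @not_cut_gt_last_cut C (pos y) (block_start d m l.+1).
  by rewrite lab_y block_start_ltS // next_le cut_next => /(_ isT).
have := block_starts_cover d_gt0 blocks_cover; have := pos_lt y.
have -> : d * m = l.+1 by lia.
lia.
Qed.

Lemma red_degree_first_phase U :
  U \in cut_partition C -> red_degree e (cut_partition C) U <= d * m + d - 1.
Proof.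
case/imsetP=> x _ ->; have [le_t|lt_t] := leqP (last_cut C (pos x)) t.
  have /mapP[l] := first_phase_last_cut_start le_t.
  rewrite mem_iota add0n => l_lt lab_x.
  apply: leq_trans (red_degree_cut_class C x) _.
  apply: leq_trans (block_budget d_gt0 l_lt); rewrite mulnC leq_add ?leq_mul //.
    rewrite -[l in _ <= l](size_iota 0) -(size_map (block_start d m)).
    apply: card_cut_classes_le => y; rewrite inE => lt_x.
    have /mapP[k] := first_phase_last_cut_start (ltnW (leq_trans lt_x le_t)).
    rewrite mem_iota => _ lab_y; rewrite lab_y map_f // mem_iota add0n.
    move: lt_x; rewrite lab_x lab_y; apply: contraLR; rewrite -!leqNgt.
    exact: leq_block_start.
  exact: first_phase_block_card.
rewrite first_phase_singleton //.
apply: leq_trans (_ : #|[set cut_class C y | y in [set y | last_cut C (pos y) <= t]]| <= _).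
  apply: subset_leq_card; apply/subsetP => W; rewrite inE => /andP[/imsetP[y _ ->]].
  case/andP => _ red; apply/imsetP; exists y => //; rewrite inE leqNgt; apply/negP => lt_y.
  by rewrite first_phase_singleton // red_edge_singletons in red.
apply: leq_trans (_ : size (block_starts d m) <= _); last by rewrite size_map size_iota; lia.
by apply: card_cut_classes_le => y; rewrite inE; exact: first_phase_last_cut_start.
Qed.

End FirstPhase.

Lemma block_contraction :
  exists s, contraction_seq s /\ seq_width e s <= d * m + d - 1.
Proof.
set s0 := iota 1 #|T|.-1; set bs := block_starts d m.
set nonstarts := [seq i <- s0 | i \notin bs].
set r := nonstarts ++ [seq i <- s0 | i \in bs].
have mem_s0 i : (i \in s0) = (0 < i < #|T|) by rewrite mem_iota; apply/idP/idP; lia.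
have mem_r i : (i \in r) = (0 < i < #|T|).
  by rewrite mem_cat !mem_filter mem_s0; case: (i \in bs); rewrite ?orbF.
have r_uniq : uniq r.
  rewrite cat_uniq !filter_uniq ?iota_uniq //= andbT; apply/hasPn => i.
  by rewrite !mem_filter => /andP[-> _].
exists [seq cut_partition (remaining_cuts r k) | k <- iota 1 (size r)]; split.
  by apply: contraction_seq_remaining_cuts => //; [apply/allP => i|move=> i]; rewrite mem_r.
apply: seq_width_le => P; rewrite (singletons_remaining_cuts r).
rewrite -[_ :: _]/[seq cut_partition (remaining_cuts r k) | k <- iota 0 (size r).+1].
case/mapP=> k; rewrite mem_iota add0n ltnS => k_le ->.
have [k_first|k_second] := leqP k (size nonstarts).
  have [j take_j] := take_filter (predC (mem bs)) s0 k.
  apply: (red_degree_first_phase (t := minn j #|T|.-1)) => i /andP[i_gt0 i_lt].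
  rewrite /remaining_cuts i_gt0 i_lt takel_cat // take_j take_iota mem_filter mem_iota /=.
  rewrite i_gt0 add1n ltnS negb_and negbK -ltnNge.
  by case: (i \in bs).
apply: red_degree_block_cuts => i.
rewrite /remaining_cuts take_cat (leq_gtF (ltnW k_second)) mem_cat negb_or.
case/and3P=> i_cut /[!mem_filter] /[!mem_s0] + _; rewrite i_cut andbT.
by case: (i \in bs).
Qed.

End Intervals.

Lemma forward_degree_rev (T : finType) (e : rel T) d (ord : seq T) :
  uniq ord -> (forall x, x \in ord) ->
  (forall p q v, ord = p ++ v :: q -> count (e v) p <= d) ->
  forall v, #|[set w | e v w && (index v (rev ord) < index w (rev ord))]| <= d.
Proof.
move=> ord_uniq ord_all ord_deg v; have v_ord := ord_all v.
case/splitPr: v_ord ord_uniq ord_all ord_deg => p q pq_uniq pq_all pq_deg.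
have v_q : v \notin q by move: pq_uniq; rewrite cat_uniq /= => /and3P[_ _ /andP[]].
apply: leq_trans (pq_deg p q v erefl); rewrite -size_filter.
apply: leq_trans (card_size _); apply: subset_leq_card; apply/subsetP => w.
rewrite inE mem_filter rev_cat rev_cons cat_rcons !index_cat mem_rev (negbTE v_q) /=.
rewrite eqxx addn0 => /andP[-> /=]; move: (pq_all w); rewrite mem_cat inE.
case/or3P=> [// | /eqP-> | wq]; first by rewrite mem_rev (negbTE v_q) eqxx addn0 ltnn.
rewrite mem_rev wq; have := index_mem w (rev q); rewrite mem_rev wq size_rev.
by move=> lt1 /(ltn_trans lt1); rewrite ltnn.
Qed.

Lemma exists_max_block_size n d : 0 < d -> exists m,
  [/\ 0 < m, 2 * n <= d * m * m.+1 & d * m.-1 * (d * m.-1) <= 2 * d * n].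
Proof.
move=> d_gt0; have ex_m : exists m, (0 < m) && (2 * n <= d * m * m.+1).
  by exists n.+1; apply/andP; split => //; nia.
case: (ex_minnP ex_m) => m /andP[m_gt0 cover] m_min; exists m; split => //.
have [->|m1_gt0] := posnP m.-1; first by rewrite muln0.
have : d * m.-1 * m < 2 * n.
  rewrite ltnNge; apply/negP => le_n; have := m_min m.-1; rewrite m1_gt0 prednK //.
  by move/(_ le_n); lia.
nia.
Qed.

Lemma INR_le_sqrt k N : k * k <= N -> Rle (INR k) (sqrt (INR N)).
Proof.
move=> kN; rewrite -(sqrt_square (INR k)); last exact: pos_INR.
apply: sqrt_le_1_alt.
by rewrite -mult_INR; apply/le_INR/leP.
Qed.

Theorem mainTheorem4 (T : finType) (e : rel T) (d : nat) :
  symmetric e -> irreflexive e -> degenerate e d ->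
  tww_le e (Rplus (sqrt (INR (2 * d * #|T|))) (INR (2 * d))).
Proof.
move=> e_sym e_irr [ord [ord_perm ord_deg]].
have ord_uniq : uniq ord by rewrite (perm_uniq ord_perm) enum_uniq.
have ord_all x : x \in ord by rewrite (perm_mem ord_perm) mem_enum.
set u := rev ord.
have u_uniq : uniq u by rewrite rev_uniq.
have u_all x : x \in u by rewrite mem_rev.
have forward_deg := forward_degree_rev ord_uniq ord_all ord_deg.
have [d0|d_gt0] := posnP d.
  have [s cs] := exists_contraction_seq u_uniq u_all.
  exists s; split => //; rewrite d0 muln0 mul0n sqrt_0 Rplus_0_l.
  apply/le_INR/leP/seq_width_le => P _ U _; rewrite red_degree_edgeless //.
  have no_fwd := @forward_degree0_no_edge T u u_all e d forward_deg.
  exact: no_fwd e_sym e_irr d0.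
have [m [m_gt0 cover bound]] := exists_max_block_size #|T| d_gt0.
have [s [cs width]] := block_contraction u_uniq u_all forward_deg d_gt0 m_gt0 cover.
exists s; split => //; apply: Rle_trans (_ : Rle (INR (d * m.-1 + 2 * d)) _).
  by apply/le_INR/leP; apply: leq_trans width _; rewrite -{1}(prednK m_gt0) mulnS; lia.
by rewrite plus_INR; apply/Rplus_le_compat_r/INR_le_sqrt.
Qed.
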